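(* Let $\mathcal{A}$ be a safe GTA without renamings with $n\ge1$ clocks, and let $M\in\mathbb{N}$ be such that every finite constant $c$ in a guard of $\mathcal{A}$ satisfies $|c|\le M$. Let $\rho: (q_1,v_1)\xrightarrow{\delta_1,t_1}(q_2,v_2)\xrightarrow{\delta_2,t_2}\cdots(q_k,v_k)$ be a path in the transition system of $\mathcal{A}$ such that $v_1\sim_M v_k$ and for every future clock $x$, either $x$ is released in the transition sequence $t_1\dots t_{k-1}$ or $v_1(x)=-\infty$. Let $L=\{x\mid -M\le v_1(x)\}$, and let $v_k'$ be a valuation with $v_k'\!\downarrow_L=v_k\!\downarrow_L$ and $v_1\approx_M v_k'$. Then there is a path $\rho': (q_1,v_1)=(q_1,v_1')\xrightarrow{\delta_1,t_1}(q_2,v_2')\xrightarrow{\delta_2,t_2}\cdots(q_k,v_k')$ in the transition system of $\mathcal{A}$ leading from $(q_1,v_1)$ to $(q_k,v_k')$.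
   Context: Clocks, valuations: $X=X_F\uplus X_H$ (future / history clocks), $n=|X|$, constant clock $0$; $\overline{\mathbb{R}}=\mathbb{R}\cup\{\pm\infty\}$ with $(+\infty)+\alpha=+\infty$, $(-\infty)+\beta=-\infty$ for $\beta\ne+\infty$, $-(\pm\infty)=\mp\infty$. A valuation $v:X\cup\{0\}\to\overline{\mathbb{R}}$ has $v(0)=0$, history clocks in $\mathbb{R}_{\ge0}\cup\{+\infty\}$, future clocks in $\mathbb{R}_{\le0}\cup\{-\infty\}$; $v\!\downarrow_L$ is restriction to $L$. Constraints: conjunctions of $x-y\triangleleft c$ ($x,y\in X\cup\{0\}$, ${\triangleleft}\in\{<,\le\}$, $c\in\mathbb{Z}\cup\{\pm\infty\}$), $v\models x-y\triangleleft c$ iff $v(x)-v(y)\triangleleft c$. $v+\delta$ adds $\delta$ to each clock; $[R]v$ is the set of $v'$ with $v'(x)=0$ for $x\in R\cap X_H$, $v'(x)=v(x)$ for $x\notin R$, arbitrary for $x\in R\cap X_F$ (released). GTA without renamings: transitions $t=(q,a,\mathsf{prog},q')$, $\mathsf{prog}$ a sequence of guards $g$ ($v\xrightarrow{g}v$ iff $v\models g$) and changes $[R]$ ($v\xrightarrow{[R]}v'$ iff $v'\in[R]v$); a future clock $x$ is released in $t$ if $\mathsf{prog}$ contains $[R]$ with $x\in R$. A step $(q,v)\xrightarrow{\delta,t}(q',v')$ means $v+\delta$ is a valuation and $v+\delta\xrightarrow{\mathsf{prog}}v'$. Safety: with $X_D$ the future clocks occurring in guards $x-y\triangleleft c$ with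 $x,y\in X_F$, every program checks each clock of $X_D$ to be $0$ or $-\infty$ before releasing it, and initial guards force every history clock to $0$ or $+\infty$. For $\alpha\in\mathbb{R}$, $\{\alpha\}=\alpha-\lfloor\alpha\rfloor$. $\alpha\sim_K\beta$ iff $\alpha\triangleleft c\iff\beta\triangleleft c$ for ${\triangleleft}\in\{<,\le\}$, $c\in\{\pm\infty\}$ or $c\in\mathbb{Z}$ with $|c|\le K$; $v_1\sim_M v_2$ iff $v_1(x)\sim_{nM}v_2(x)$ for all $x$ and $v_1(x)-v_1(y)\sim_{(n+1)M}v_2(x)-v_2(y)$ for all $x,y$. $v_1\approx_M v_2$ iff for all clocks $x,y$: (1) $v_1(x)\triangleleft c\iff v_2(x)\triangleleft c$ for $c\in\{\pm\infty\}$ or $c\in\mathbb{Z}$, $c\le M$; (2) $v_1\models x-y\triangleleft c\iff v_2\models x-y\triangleleft c$ for $c\in\{\pm\infty\}$ or $c\in\mathbb{Z}$, $|c|\le M$; (3) if $-\infty<v_1(x),v_1(y)\le M$ then $\{v_1(x)\}\le\{v_1(y)\}\iff\{v_2(x)\}\le\{v_2(y)\}$. *)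

From mathcomp Require Import ssreflect ssrbool eqtype fintype.
From Stdlib Require Import Reals ZArith List.
Set Implicit Arguments.
Unset Strict Implicit.
Open Scope R_scope.

Inductive ER : Type := Fin (r : R) | PInf | NInf.

Definition eadd (a b : ER) : ER :=
  match a, b with
  | PInf, _ => PInf
  | _, PInf => PInf
  | NInf, _ => NInf
  | _, NInf => NInf
  | Fin x, Fin y => Fin (x + y)
  end.

Definition eopp (a : ER) : ER :=
  match a with Fin x => Fin (- x) | PInf => NInf | NInf => PInf end.

Definition esub (a b : ER) : ER := eadd a (eopp b).

Definition ele (a b : ER) : Prop :=
  match a, b with
  | NInf, _ => True
  | _, PInf => True
  | Fin x, Fin y => x <= y
  | _, _ => False
  end.

Definition elt (a b : ER) : Prop := ele a b /\ a <> b.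

Inductive cst : Type := CZ (z : Z) | CPInf | CNInf.

Definition cst_val (c : cst) : ER :=
  match c with CZ z => Fin (IZR z) | CPInf => PInf | CNInf => NInf end.

Inductive op : Type := OLt | OLe.

Definition cmp (o : op) (a : ER) (c : cst) : Prop :=
  match o with OLt => elt a (cst_val c) | OLe => ele a (cst_val c) end.

Definition cst_abs_le (K : nat) (c : cst) : Prop :=
  match c with CZ z => (Z.abs z <= Z.of_nat K)%Z | _ => True end.

Definition cst_le (M : nat) (c : cst) : Prop :=
  match c with CZ z => (z <= Z.of_nat M)%Z | _ => True end.

Definition simK (K : nat) (a b : ER) : Prop :=
  forall (o : op) (c : cst), cst_abs_le K c -> (cmp o a c <-> cmp o b c).

Section Clocks.
Variable X : finType.
(* fut x = true iff x ∈ X_F (future clock); otherwise x ∈ X_H (history clock) *)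
Variable fut : X -> bool.

Definition nclocks : nat := #|X|.

(* valuations; the constant clock 0 is [None] and always has value 0 *)
Definition valu := X -> ER.
Definition ev (v : valu) (c : option X) : ER :=
  match c with None => Fin 0 | Some x => v x end.

Definition is_val (v : valu) : Prop :=
  forall x, if fut x
            then (v x = NInf \/ exists r, v x = Fin r /\ r <= 0)
            else (v x = PInf \/ exists r, v x = Fin r /\ 0 <= r).

Record atom := Atom { ax : option X; ay : option X; aop : op; acst : cst }.
Definition guard := list atom.

Definition sat_atom (v : valu) (a : atom) : Prop :=
  cmp (aop a) (esub (ev v (ax a)) (ev v (ay a))) (acst a).
Definition sat (v : valu) (g : guard) : Prop :=
  forall a, In a g -> sat_atom v a.

Inductive instr := IGuard (g : guard) | IChange (Rs : list X).
Definition prog := list instr.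

Definition change (Rs : list X) (v v' : valu) : Prop :=
  is_val v' /\
  (forall x, In x Rs -> fut x = false -> v' x = Fin 0) /\
  (forall x, ~ In x Rs -> v' x = v x).

Inductive run : prog -> valu -> valu -> Prop :=
| run_nil v : run nil v v
| run_guard g p v v' : sat v g -> run p v v' -> run (IGuard g :: p) v v'
| run_change Rs p v v1 v' : change Rs v v1 -> run p v1 v' -> run (IChange Rs :: p) v v'.

Definition shift (v : valu) (d : R) : valu :=
  fun x => match v x with Fin r => Fin (r + d) | e => e end.

Definition prog_guards (p : prog) : list guard :=
  flat_map (fun i => match i with IGuard g => g :: nil | _ => nil end) p.

Section Automaton.
Variables Q Sg : finType.

Definition trans := (Q * Sg * prog * Q)%type.
Definition tsrc (t : trans) : Q := let '(q, _, _, _) := t in q.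
Definition tprog (t : trans) : prog := let '(_, _, p, _) := t in p.
Definition tdst (t : trans) : Q := let '(_, _, _, q) := t in q.

Record GTA := { gtrans : list trans; ginit : list (Q * guard) }.

Definition guards_of (A : GTA) : list guard :=
  map snd (ginit A) ++ flat_map (fun t => prog_guards (tprog t)) (gtrans A).

Definition const_bound (M : nat) (A : GTA) : Prop :=
  forall g a z, In g (guards_of A) -> In a g -> acst a = CZ z ->
    (Z.abs z <= Z.of_nat M)%Z.

Definition in_XD (A : GTA) (x : X) : Prop :=
  fut x = true /\
  exists g a y, In g (guards_of A) /\ In a g /\ fut y = true /\
    ((ax a = Some x /\ ay a = Some y) \/ (ax a = Some y /\ ay a = Some x)).

Definition safe (A : GTA) : Prop :=
  (forall t p1 Rs p2 x, In t (gtrans A) ->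
     tprog t = p1 ++ IChange Rs :: p2 -> In x Rs -> in_XD A x ->
     forall v v', is_val v -> run p1 v v' -> v' x = Fin 0 \/ v' x = NInf) /\
  (forall q g v, In (q, g) (ginit A) -> is_val v -> sat v g ->
     forall x, fut x = false -> v x = Fin 0 \/ v x = PInf).

Definition released (t : trans) (x : X) : Prop :=
  fut x = true /\ exists Rs, In (IChange Rs) (tprog t) /\ In x Rs.

Definition step (A : GTA) (q : Q) (v : valu) (d : R) (t : trans) (q' : Q) (v' : valu) : Prop :=
  In t (gtrans A) /\ tsrc t = q /\ tdst t = q' /\ 0 <= d /\
  is_val (shift v d) /\ run (tprog t) (shift v d) v'.

(* path (q_1,v_1) -> ... -> (q_k,v_k), indexed 0..k-1 *)
Definition is_path (A : GTA) (k : nat) (qs : nat -> Q) (vs : nat -> valu)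
    (ds : nat -> R) (ts : nat -> trans) : Prop :=
  le 1 k /\
  (forall i, lt i k -> is_val (vs i)) /\
  (forall i, lt (S i) k ->
     step A (qs i) (vs i) (ds i) (ts i) (qs (S i)) (vs (S i))).

End Automaton.

Definition simM (M : nat) (v1 v2 : valu) : Prop :=
  (forall x, simK (Nat.mul nclocks M) (v1 x) (v2 x)) /\
  (forall x y, simK (Nat.mul (S nclocks) M) (esub (v1 x) (v1 y)) (esub (v2 x) (v2 y))).

Definition approxM (M : nat) (v1 v2 : valu) : Prop :=
  (forall x o c, cst_le M c -> (cmp o (v1 x) c <-> cmp o (v2 x) c)) /\
  (forall x y o c, cst_abs_le M c ->
     (cmp o (esub (v1 x) (v1 y)) c <-> cmp o (esub (v2 x) (v2 y)) c)) /\
  (forall x y r1 s1 r2 s2,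
     v1 x = Fin r1 -> v1 y = Fin s1 -> r1 <= INR M -> s1 <= INR M ->
     v2 x = Fin r2 -> v2 y = Fin s2 ->
     (frac_part r1 <= frac_part s1 <-> frac_part r2 <= frac_part s2)).

End Clocks.

(* Only the future clocks x with -oo < v_1(x) < -M need correcting. Each of them
   is released somewhere along the path and afterwards only drifts with time, so
   after its last release v_i(x) is v_k(x) minus the time remaining until the end
   of the path. The new path keeps the old valuations, except that after its last
   release such an x carries v_k'(x) minus the remaining time instead.
   Take a guard atom x - y < c (or <=) with x corrected; v_k(x) and v_k'(x) both
   lie below -M. If y is corrected as well, or uncorrected and only drifting until
   the end, the old and new differences are those of v_k and of v_k', which meet
   the same constraints since v_1 ~_M v_k and v_1 ≈_M v_k'. Otherwise y is the
   clock 0, a history clock, or a future clock of X_D released later, which safety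
   forces to be 0 or -oo at that release; so y is at least minus the remaining
   time and both differences lie below -M. *)

From Pilot Require Import Defs.
From mathcomp Require Import ssreflect ssrbool eqtype fintype.
From Stdlib Require Import Reals ZArith List Lia Lra.
From Stdlib Require Import Classical ClassicalEpsilon FunctionalExtensionality.
Open Scope R_scope.
Set Implicit Arguments.
Unset Strict Implicit.

Definition eshift (e : ER) (d : R) : ER :=
  match e with Fin r => Fin (r + d) | _ => e end.

Lemma shift_apply (X : finType) (v : valu X) d x : Defs.shift v d x = eshift (v x) d.
Proof. by rewrite /Defs.shift /eshift; case: (v x). Qed.

Lemma eshift0 e : eshift e 0 = e.
Proof. by case: e => [r| |] //=; rewrite Rplus_0_r. Qed.

Lemma eshiftD e a b : eshift (eshift e a) b = eshift e (a + b).
Proof. by case: e => [r| |] //=; rewrite Rplus_assoc. Qed.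

Lemma eshift_Fin_inv e d p : eshift e d = Fin p -> e = Fin (p - d).
Proof. by case: e => [r| |] //= -[<-]; congr Fin; ring. Qed.

Lemma esub_eshift a b d : esub (eshift a d) (eshift b d) = esub a b.
Proof. by case: a => [r| |]; case: b => [s| |]; rewrite /esub //=; congr Fin; ring. Qed.

Definition finite_ge (lo : R) (e : ER) : Prop := forall s, e = Fin s -> lo <= s.

Lemma finite_ge_of_release e d r :
  eshift e d = Fin 0 \/ eshift e d = NInf -> d <= r -> finite_ge (- r) e.
Proof. by move=> he hd s hs; rewrite hs /= in he; case: he => // -[]; lra. Qed.

Lemma cmp_FinE o a c :
  cmp o (Fin a) c <->
  match c with
  | CZ z => if o is OLt then a < IZR z else a <= IZR z
  | CPInf => True
  | CNInf => False
  end.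
Proof.
  case: o; case: c => [z| |]; rewrite /= /elt /=; try tauto.
  - split=> [[h hne]|h]; last by split; [lra | case; lra].
    by case: (Rle_lt_or_eq_dec _ _ h) => // e; rewrite e in hne.
  - by split=> // _; split.
Qed.

Lemma cmp_NInfE e : cmp OLe e CNInf <-> e = NInf.
Proof. by case: e. Qed.

Lemma fin_below_iff e z :
  (exists r, e = Fin r /\ r < IZR z) <-> cmp OLt e (CZ z) /\ ~ cmp OLe e CNInf.
Proof.
  case: e => [r| |].
  - rewrite cmp_FinE /=; split=> [[s [[<-] h]] | [h _]]; [by split | by exists r].
  - by split=> [[s []]|[[]]].
  - by split=> [[s []]|[_ []]].
Qed.

Lemma cst_abs_le_bounds M z : cst_abs_le M (CZ z) -> - INR M <= IZR z <= INR M.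
Proof. by rewrite /= INR_IZR_INZ -opp_IZR => hz; split; apply: IZR_le; lia. Qed.

Lemma cst_abs_le_mono m n c : (m <= n)%nat -> cst_abs_le m c -> cst_abs_le n c.
Proof. by case: c => //= z hmn; lia. Qed.

Lemma cmp_Fin_below M o c a b :
  a < - INR M -> b < - INR M -> cst_abs_le M c -> (cmp o (Fin a) c <-> cmp o (Fin b) c).
Proof.
  rewrite !cmp_FinE => ha hb; case: c => // z /cst_abs_le_bounds hz.
  by case: o; split=> _; lra.
Qed.

Lemma cmp_Fin_above M o c a b :
  INR M < a -> INR M < b -> cst_abs_le M c -> (cmp o (Fin a) c <-> cmp o (Fin b) c).
Proof.
  rewrite !cmp_FinE => ha hb; case: c => // z /cst_abs_le_bounds hz.
  by case: o; split=> h; lra.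
Qed.

Lemma cmp_esub_low_l M lo a a' b o c :
  a < lo - INR M -> a' < lo - INR M -> finite_ge lo b -> cst_abs_le M c ->
  (cmp o (esub (Fin a) b) c <-> cmp o (esub (Fin a') b) c).
Proof.
  case: b => [s| |] ha ha' hb hc //; have hs : lo <= s by exact: hb.
  by rewrite /esub /=; apply: (cmp_Fin_below (M := M)) => //; lra.
Qed.

Lemma cmp_esub_low_r M lo a a' b o c :
  a < lo - INR M -> a' < lo - INR M -> finite_ge lo b -> cst_abs_le M c ->
  (cmp o (esub b (Fin a)) c <-> cmp o (esub b (Fin a')) c).
Proof.
  case: b => [s| |] ha ha' hb hc //; have hs : lo <= s by exact: hb.
  by rewrite /esub /=; apply: (cmp_Fin_above (M := M)) => //; lra.
Qed.

Section Valuations.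
Variables (X : finType) (fut : X -> bool).

(* [is_val fut v] unfolds to [forall x, val_at x (v x)]. *)
Definition val_at (x : X) (e : ER) : Prop :=
  if fut x then e = NInf \/ exists r, e = Fin r /\ r <= 0
  else e = PInf \/ exists r, e = Fin r /\ 0 <= r.

Lemma val_at_future_shift x e d :
  fut x = true -> val_at x e -> 0 <= d -> val_at x (eshift e (- d)).
Proof.
  rewrite /val_at => -> [-> | [r [-> hr]]] hd; first by left.
  by right; exists (r + - d); split=> //; lra.
Qed.

Definition override (P : X -> Prop) (f w : valu X) : valu X :=
  fun x => if excluded_middle_informative (P x) then f x else w x.

Lemma override_in P f w x : P x -> override P f w x = f x.
Proof. by rewrite /override; case: excluded_middle_informative. Qed.

Lemma override_out P f w x : ~ P x -> override P f w x = w x.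
Proof. by rewrite /override; case: excluded_middle_informative. Qed.

Lemma override_ext P P' f w :
  (forall x, P x <-> P' x) -> override P f w = override P' f w.
Proof.
  move=> hP; apply: functional_extensionality => x.
  case: (classic (P x)) => hx.
  - by rewrite !override_in //; apply/hP.
  - by rewrite !override_out // => /hP.
Qed.

Lemma shift_override P f w d :
  Defs.shift (override P f w) d = override P (Defs.shift f d) (Defs.shift w d).
Proof.
  apply: functional_extensionality => x.
  by rewrite /override !shift_apply; case: excluded_middle_informative.
Qed.

Lemma override_is_val P f w :
  (forall x, P x -> val_at x (f x)) -> is_val fut w -> is_val fut (override P f w).
Proof.
  move=> hf hw x; case: (classic (P x)) => hx.
  - by rewrite override_in //; apply: hf.
  - by rewrite override_out //; apply: hw.
Qed.

Definition releases (p : prog X) (x : X) : Prop :=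
  exists Rs, In (IChange Rs) p /\ In x Rs.

Lemma releases_nil x : ~ releases nil x.
Proof. by case=> Rs [[]]. Qed.

Lemma releases_guard g p x : releases (IGuard g :: p) x <-> releases p x.
Proof.
  split=> [[Rs [[//|hin] hx]] | [Rs [hin hx]]]; exists Rs; split=> //; by right.
Qed.

Lemma releases_change Rs p x : releases (IChange Rs :: p) x <-> In x Rs \/ releases p x.
Proof.
  split=> [[Rs' [[[->] | hin] hx]] | [hx | [Rs' [hin hx]]]].
  - by left.
  - by right; exists Rs'.
  - by exists Rs; split=> //; left.
  - by exists Rs'; split=> //; right.
Qed.

Lemma releases_first p x :
  releases p x ->
  exists p1 Rs p2, p = p1 ++ IChange Rs :: p2 /\ In x Rs /\ ~ releases p1 x.
Proof.
  elim: p => [|i p IH]; first by move/releases_nil.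
  case: (classic (exists Rs, i = IChange Rs /\ In x Rs)) => [[Rs [-> hx]] _ | hi].
  - by exists nil, Rs, p; split; [|split; [|apply: releases_nil]].
  - case=> Rs [[ei | hin] hx]; first by case: hi; exists Rs.
    have [p1 [Rs' [p2 [-> [hx' hn]]]]] := IH (ex_intro _ Rs (conj hin hx)).
    exists (i :: p1), Rs', p2; split=> //; split=> //.
    case=> Rs'' [[ei | hin'] hx'']; first by apply: hi; exists Rs''.
    by apply: hn; exists Rs''.
Qed.

Lemma run_app p1 p2 v w v' :
  run fut p1 v w -> run fut p2 w v' -> run fut (p1 ++ p2) v v'.
Proof.
  elim=> [u | g p u u' hg _ IH | Rs p u u1 u' hc _ IH] h2 //=.
  - by apply: run_guard; [|apply: IH].
  - by apply: run_change hc (IH h2).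
Qed.

Lemma run_app_inv p1 p2 v v' :
  run fut (p1 ++ p2) v v' -> exists w, run fut p1 v w /\ run fut p2 w v'.
Proof.
  elim: p1 v => [|i p1 IH] v /=; first by exists v; split=> //; apply: run_nil.
  move=> h; inversion h as [|g p u u' hg hr|Rs p u u1 u' hc hr]; subst.
  - by have [w [h1 h2]] := IH _ hr; exists w; split=> //; apply: run_guard.
  - by have [w [h1 h2]] := IH _ hr; exists w; split=> //; apply: run_change hc h1.
Qed.

Lemma run_unreleased p v v' x : run fut p v v' -> ~ releases p x -> v' x = v x.
Proof.
  elim=> [u | g q u u' _ _ IH | Rs q u u1 u' hc _ IH] hn //.
  - by apply: IH => h; apply: hn; apply/releases_guard.
  - case: hc => _ [_ hkeep]; rewrite IH ?hkeep // => h; apply: hn; apply/releases_change.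
    + by left.
    + by right.
Qed.

Lemma run_is_val p v v' : run fut p v v' -> is_val fut v -> is_val fut v'.
Proof. by elim=> // Rs q u u1 u' [hv _] _ IH _; apply: IH. Qed.

Lemma run_override (B : X -> Prop) (f : valu X) p v v' :
  (forall x, B x -> fut x = true) -> (forall x, B x -> val_at x (f x)) ->
  (forall pre g post u, p = pre ++ IGuard g :: post ->
     run fut pre v u -> run fut post u v' -> sat u g ->
     sat (override (fun x => B x /\ ~ releases post x) f u) g) ->
  run fut p v v' ->
  run fut p (override (fun x => B x /\ ~ releases p x) f v) (override B f v').
Proof.
  move=> hBf hf hguards hrun.
  elim: hrun hguards => [u | g q u u' hg hrun IH | Rs q u u1 u' hch hrun IH] hguards.
  - rewrite (override_ext (P' := B)); first by apply: run_nil.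
    by move=> x; split=> [[]|hx]; [|split=> //; apply: releases_nil].
  - rewrite (override_ext (P' := fun x => B x /\ ~ releases q x)); last first.
      move=> x; split=> -[hx hn]; split=> // h; apply: hn.
        exact/releases_guard.
      exact/(releases_guard g).
    apply: run_guard; first by apply: (hguards nil) => //; apply: run_nil.
    apply: IH => pre g' post w hq hpre hpost hsat; rewrite hq in hguards.
    by apply: (hguards (IGuard g :: pre)) => //; apply: run_guard.
  - apply: (run_change (v1 := override (fun x => B x /\ ~ releases q x) f u1)); last first.
      apply: IH => pre g' post w hq hpre hpost hsat; rewrite hq in hguards.
      by apply: (hguards (IChange Rs :: pre)) => //; apply: run_change hch hpre.
    case: hch => hval [hreset hkeep]; split; [|split].
    + by apply: override_is_val hval => x [hx _]; apply: hf.
    + move=> x hx hfx; rewrite override_out ?hreset // => -[hb _].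
      by rewrite hBf in hfx.
    + move=> x hx; case: (classic (B x /\ ~ releases q x)) => [[hb hn] | hact].
      * rewrite !override_in //; split=> // /releases_change [] //.
      * rewrite !override_out ?hkeep // => -[hb hn]; apply: hact; split=> // hp.
        by apply: hn; apply/releases_change; right.
Qed.

Section Automaton.
Variables (Q Sg : finType) (A : GTA X Q Sg).

Lemma guards_of_trans t g :
  In t (gtrans A) -> In (IGuard g) (tprog t) -> In g (guards_of A).
Proof.
  move=> ht hg; apply/in_or_app; right; apply/in_flat_map; exists t; split=> //.
  by apply/in_flat_map; exists (IGuard g); split=> //; left.
Qed.

Lemma const_bound_atom M g a :
  const_bound M A -> In g (guards_of A) -> In a g -> cst_abs_le M (acst a).
Proof. by move=> hM hg ha; case E: (acst a) => [z| |] //=; apply: hM hg ha E. Qed.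

Lemma safe_release_value t pre post v0 u v' y :
  safe fut A -> In t (gtrans A) -> tprog t = pre ++ post -> is_val fut v0 ->
  run fut pre v0 u -> run fut post u v' -> releases post y -> in_XD fut A y ->
  u y = Fin 0 \/ u y = NInf.
Proof.
  move=> [hsafe _] ht hp hv0 hpre hpost /releases_first [p1 [Rs [p2 [ep [hy hn]]]]] hxd.
  rewrite ep in hpost; have [w [h1 _]] := run_app_inv hpost.
  rewrite -(run_unreleased h1 hn).
  apply: (hsafe t (pre ++ p1) Rs p2 y ht _ hy hxd v0) => //; last exact: run_app hpre h1.
  by rewrite hp ep -app_assoc.
Qed.

End Automaton.
End Valuations.

Fixpoint elapsed (ds : nat -> R) (i : nat) : R :=
  match i with O => 0 | S i => elapsed ds i + ds i end.

Lemma elapsed_mono ds n i j :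
  (forall l, (l < n)%nat -> 0 <= ds l) -> (i <= j <= n)%nat -> elapsed ds i <= elapsed ds j.
Proof.
  move=> hds [hij hjn]; elim: j hij hjn => [|j IH] hij hjn.
  - have -> : i = 0%nat by lia.
    exact: Rle_refl.
  - case: (Nat.eq_dec i (S j)) => [-> | hne]; first lra.
    by have := IH ltac:(lia) ltac:(lia); have := hds j ltac:(lia); rewrite /=; lra.
Qed.

Section Retiming.
Variables (X : finType) (fut : X -> bool) (Q Sg : finType) (A : GTA X Q Sg).
Variables (M k : nat) (qs : nat -> Q) (vs : nat -> valu X) (ds : nat -> R).
Variables (ts : nat -> trans X Q Sg) (vk' : valu X).
Hypothesis hsafe : safe fut A.
Hypothesis hbound : const_bound M A.
Hypothesis hpath : is_path fut A k qs vs ds ts.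
Hypothesis hsim : simM M (vs 0%nat) (vs (k - 1)%nat).
Hypothesis hreleased : forall x, fut x = true ->
  (exists i, lt i (k - 1) /\ released fut (ts i) x) \/ vs 0%nat x = NInf.
Hypothesis hval' : is_val fut vk'.
Hypothesis hL : forall x, ele (Fin (- INR M)) (vs 0%nat x) -> vk' x = vs (k - 1)%nat x.
Hypothesis happrox : approxM M (vs 0%nat) vk'.

Local Notation K := (k - 1)%nat.
Local Notation T := (elapsed ds).
Local Notation remaining i := (T K - T i).

Lemma path_step i :
  (i < K)%nat -> step fut A (qs i) (vs i) (ds i) (ts i) (qs (S i)) (vs (S i)).
Proof. by case: hpath => _ [_ hstep] hi; apply: hstep; lia. Qed.

Lemma path_is_val i : (i <= K)%nat -> is_val fut (vs i).
Proof. by case: hpath => hk [hval _] hi; apply: hval; lia. Qed.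

Lemma delay_ge0 i : (i < K)%nat -> 0 <= ds i.
Proof. by case/path_step=> _ [_ [_ [hd _]]]. Qed.

Lemma remaining_ge0 i : (i <= K)%nat -> 0 <= remaining i.
Proof. by move=> hi; have := elapsed_mono delay_ge0 (conj hi (le_n K)); lra. Qed.

Definition released_between i j x := exists l, (i <= l < j)%nat /\ released fut (ts l) x.

Lemma released_between_first i j x :
  released_between i j x ->
  exists l, (i <= l < j)%nat /\ released fut (ts l) x /\ ~ released_between i l x.
Proof.
  elim: j => [|j IH] [l [hl hrel]]; first lia.
  case: (classic (released_between i j x)) => [/IH [l' [hl' hfirst]] | hn].
    by exists l'; split; [lia|].
  have el : l = j by case: (Nat.eq_dec l j) => // hne; case: hn; exists l; split=> //; lia.
  by subst l; exists j; split; [lia|].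
Qed.

Lemma clock_drift i j y :
  fut y = true -> (i <= j <= K)%nat -> ~ released_between i j y ->
  vs j y = eshift (vs i y) (T j - T i).
Proof.
  move=> hy; elim: j => [|j IH] hij hn.
  - have -> : i = 0%nat by lia.
    by rewrite Rminus_diag eshift0.
  - case: (Nat.eq_dec i (S j)) => [<- | hne]; first by rewrite Rminus_diag eshift0.
    have [_ [_ [_ [_ [_ hrun]]]]] := path_step (i := j) ltac:(lia).
    rewrite (run_unreleased hrun) ?shift_apply ?IH ?eshiftD /=.
    + by congr eshift; ring.
    + lia.
    + by case=> l [hl hrel]; apply: hn; exists l; split=> //; lia.
    + by move=> hrel; apply: hn; exists j; split; [lia|].
Qed.

Definition deep x := exists r, vs 0%nat x = Fin r /\ r < - INR M.

Lemma deep_future x : deep x -> fut x = true.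
Proof.
  move=> [r [hr hlt]]; have := path_is_val (i := 0) ltac:(lia) x; rewrite hr.
  by case: (fut x) => // -[//| [s [[<-] hs]]]; have := pos_INR M; lra.
Qed.

Lemma deep_released x : deep x -> released_between 0 K x.
Proof.
  move=> hx; case: (hreleased (deep_future hx)) => [[i [hi hrel]] | hinf].
    by exists i; split=> //; lia.
  by case: hx => r [hr _]; rewrite hr in hinf.
Qed.

Lemma end_not_deep x : ~ deep x -> vk' x = vs K x.
Proof.
  move=> hx; case E: (vs 0%nat x) => [r| |].
  - apply: hL; rewrite E /=; apply: Rnot_lt_le => hr; apply: hx; by exists r.
  - by apply: hL; rewrite E.
  - have hK := proj1 (proj1 hsim x OLe CNInf I).
    have hk' := proj1 (proj1 happrox x OLe CNInf I).
    move: hK hk'; rewrite !cmp_NInfE E => hK hk'.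
    by rewrite hK ?hk'.
Qed.

Hypothesis hclocks : le 1 (nclocks X).

Lemma end_deep x :
  deep x ->
  (exists p, vs K x = Fin p /\ p < - INR M) /\ (exists p', vk' x = Fin p' /\ p' < - INR M).
Proof.
  have hz : IZR (- Z.of_nat M) = - INR M by rewrite opp_IZR -INR_IZR_INZ.
  move=> [r [hr hlt]]; rewrite -hz.
  have /fin_below_iff [hlt0 hninf] : exists r, vs 0%nat x = Fin r /\ r < IZR (- Z.of_nat M).
    by exists r; rewrite hz.
  split; apply/fin_below_iff; split.
  - by apply/(proj1 hsim x OLt _ _) => //=; move: hclocks; rewrite /nclocks; nia.
  - by rewrite -(proj1 hsim x OLe CNInf I).
  - by apply/(proj1 happrox x OLt _ _) => //=; lia.
  - by rewrite -(proj1 happrox x OLe CNInf I).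
Qed.

Lemma end_diff x y o c :
  cst_abs_le M c ->
  (cmp o (esub (vs K x) (vs K y)) c <-> cmp o (esub (vk' x) (vk' y)) c).
Proof.
  move=> hc; rewrite -(proj2 hsim x y o c) ?(proj1 (proj2 happrox) x y o c) //.
  by apply: cst_abs_le_mono hc; nia.
Qed.

Definition corrected i x := deep x /\ ~ released_between i K x.

Definition retimed i : valu X :=
  override (corrected i) (Defs.shift vk' (- (remaining i))) (vs i).

Section Midpoint.
Variables (i : nat) (pre post : prog X) (u : valu X).
Hypothesis hi : (i < K)%nat.
Hypothesis hprog : tprog (ts i) = pre ++ post.
Hypothesis hpre : run fut pre (Defs.shift (vs i) (ds i)) u.
Hypothesis hpost : run fut post u (vs (S i)).

Local Notation rest := (remaining (S i)).

Let corrected_here x := corrected (S i) x /\ ~ releases post x.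
Let u' := override corrected_here (Defs.shift vk' (- rest)) u.
Let tracked y := vs K y = eshift (u y) rest /\ vk' y = eshift (u' y) rest.

Lemma mid_unreleased y :
  fut y = true -> ~ releases post y -> ~ released_between (S i) K y ->
  vs K y = eshift (u y) rest.
Proof.
  move=> hy hp hl; rewrite (clock_drift hy _ hl); last lia.
  by rewrite (run_unreleased hpost hp).
Qed.

Lemma mid_released y :
  fut y = true -> releases post y \/ released_between (S i) K y -> in_XD fut A y ->
  finite_ge (- rest) (u y).
Proof.
  have [ht [_ [_ [_ [hv0 _]]]]] := path_step hi.
  move=> hy hrel hxd; case: (classic (releases post y)) => hp.
  - apply: (finite_ge_of_release (d := 0)); last exact: remaining_ge0.
    by rewrite eshift0; apply: safe_release_value hsafe ht hprog hv0 hpre hpost hp hxd.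
  - have [j [hj [[_ hrj] hfirst]]] : exists j, (S i <= j < K)%nat /\ released fut (ts j) y
        /\ ~ released_between (S i) j y.
      by apply: released_between_first; case: hrel.
    have [htj [_ [_ [_ [hvj hrunj]]]]] := path_step (i := j) ltac:(lia).
    have := safe_release_value (pre := nil) hsafe htj (Logic.eq_refl _) hvj (run_nil _ _)
      hrunj hrj hxd.
    rewrite shift_apply (clock_drift hy _ hfirst); last lia.
    rewrite (run_unreleased hpost hp) eshiftD => hvalue.
    apply: finite_ge_of_release hvalue _.
    have : T (S j) <= T K by apply: elapsed_mono delay_ge0 _; lia.
    rewrite /=; lra.
Qed.

Lemma corrected_here_tracked x : corrected_here x -> tracked x.
Proof.
  move=> hx; case: (hx) => [[hd hl] hp]; split.
    exact: mid_unreleased (deep_future hd) hp hl.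
  by rewrite /u' override_in // shift_apply eshiftD Rplus_opp_l eshift0.
Qed.

Lemma corrected_here_below x :
  corrected_here x ->
  (exists p, u x = Fin p /\ p < - rest - INR M) /\
  (exists p', u' x = Fin p' /\ p' < - rest - INR M).
Proof.
  move=> hx; have [[p [hp hlt]] [p' [hp' hlt']]] := end_deep (proj1 (proj1 hx)).
  have [hK hk'] := corrected_here_tracked hx.
  split; [exists (p - rest) | exists (p' - rest)]; split; try lra.
  - by apply: eshift_Fin_inv; rewrite -hK hp.
  - by apply: eshift_Fin_inv; rewrite -hk' hp'.
Qed.

Lemma uncorrected_ev z : (forall x, z = Some x -> ~ corrected_here x) -> ev u' z = ev u z.
Proof. by case: z => [x|] //= hx; rewrite /u' override_out //; apply: hx. Qed.

Lemma uncorrected_partner g a x z :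
  In g (guards_of A) -> In a g -> corrected_here x ->
  (forall y, z = Some y -> ~ corrected_here y) ->
  (ax a = Some x /\ ay a = z) \/ (ax a = z /\ ay a = Some x) ->
  finite_ge (- rest) (ev u z) \/ exists y, z = Some y /\ tracked y.
Proof.
  move=> hg ha hx hz hxz; have hrem := remaining_ge0 (i := S i) ltac:(lia).
  case: z hz hxz => [y|] hz hxz; last by left => s [<-]; lra.
  have [_ [_ [_ [_ [hv0 _]]]]] := path_step hi.
  have hu := run_is_val hpre hv0 y.
  case hfy: (fut y) hu => hu.
  - case: (classic (releases post y \/ released_between (S i) K y)) => hrel.
      left; apply: (mid_released hfy hrel); split=> //.
      exists g, a, x; split=> //; split=> //; split; first exact: deep_future (proj1 (proj1 hx)).
      by case: hxz => -[-> ->]; [right | left].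
    right; exists y; split=> //.
    have hd : ~ deep y.
      move=> hd; apply: (hz y (Logic.eq_refl _)).
      by split; [split=> //|]; move=> h; apply: hrel; [right | left].
    have ey : u' y = u y by rewrite /u' override_out // => -[[]].
    rewrite /tracked end_not_deep // ey.
    by split; apply: mid_unreleased hfy _ _ => h; apply: hrel; [left | right | left | right].
  - left => s hs; rewrite [ev _ _]/= in hs; rewrite hs in hu.
    by case: hu => [//| [r [[->] hr]]]; lra.
Qed.

Lemma sat_atom_tracked a x y :
  ax a = Some x -> ay a = Some y -> tracked x -> tracked y -> cst_abs_le M (acst a) ->
  (sat_atom u a <-> sat_atom u' a).
Proof.
  rewrite /sat_atom => -> -> [hx hx'] [hy hy'] hc /=.
  rewrite -(esub_eshift (u x) (u y) rest) -(esub_eshift (u' x) (u' y) rest) -hx -hy -hx' -hy'.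
  exact: end_diff.
Qed.

Lemma mid_guard g : In g (guards_of A) -> sat u g -> sat u' g.
Proof.
  move=> hg hsat a ha; have hc := const_bound_atom hbound hg ha.
  apply/(_ : sat_atom u a <-> sat_atom u' a); last exact: hsat.
  case: (classic (exists x, ax a = Some x /\ corrected_here x)) => [[x [ex hx]] | hnx];
  case: (classic (exists y, ay a = Some y /\ corrected_here y)) => [[y [ey hy]] | hny].
  - exact: sat_atom_tracked ex ey (corrected_here_tracked hx) (corrected_here_tracked hy) hc.
  - have hz y : ay a = Some y -> ~ corrected_here y by move=> ey hy; apply: hny; exists y.
    have [[p [hp hlt]] [p' [hp' hlt']]] := corrected_here_below hx.
    case: (uncorrected_partner hg ha hx hz (or_introl (conj ex (Logic.eq_refl _))))
      => [hlow | [y [ey hy]]].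
    + by rewrite /sat_atom ex (uncorrected_ev hz) /= hp hp'; apply: cmp_esub_low_l hlow hc.
    + exact: sat_atom_tracked ex ey (corrected_here_tracked hx) hy hc.
  - have hz x : ax a = Some x -> ~ corrected_here x by move=> ex hx; apply: hnx; exists x.
    have [[p [hp hlt]] [p' [hp' hlt']]] := corrected_here_below hy.
    case: (uncorrected_partner hg ha hy hz (or_intror (conj (Logic.eq_refl _) ey)))
      => [hlow | [x [ex hx]]].
    + by rewrite /sat_atom ey (uncorrected_ev hz) /= hp hp'; apply: cmp_esub_low_r hlow hc.
    + exact: sat_atom_tracked ex ey hx (corrected_here_tracked hy) hc.
  - rewrite /sat_atom !uncorrected_ev //.
    + by move=> y ey hy; apply: hny; exists y.
    + by move=> x ex hx; apply: hnx; exists x.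
Qed.
End Midpoint.

Lemma retimed_target_val i x :
  (i <= K)%nat -> deep x -> val_at fut x (Defs.shift vk' (- (remaining i)) x).
Proof.
  move=> hi hx; rewrite shift_apply.
  exact: val_at_future_shift (deep_future hx) (hval' x) (remaining_ge0 hi).
Qed.

Lemma retimed_is_val i : (i <= K)%nat -> is_val fut (retimed i).
Proof.
  by move=> hi; apply: override_is_val (path_is_val hi) => x [hx _]; apply: retimed_target_val.
Qed.

Lemma retimed_first : retimed 0 = vs 0%nat.
Proof.
  apply: functional_extensionality => x.
  by rewrite /retimed override_out // => -[hx]; apply; apply: deep_released.
Qed.

Lemma retimed_last : retimed K = vk'.
Proof.
  apply: functional_extensionality => x; case: (classic (deep x)) => hx.
  - rewrite /retimed override_in; last by split=> // -[l [hl _]]; lia.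
    by rewrite shift_apply Rminus_diag Ropp_0 eshift0.
  - by rewrite /retimed override_out ?end_not_deep // => -[].
Qed.

Lemma shift_retimed i :
  (i < K)%nat ->
  Defs.shift (retimed i) (ds i) =
  override (fun x => corrected (S i) x /\ ~ releases (tprog (ts i)) x)
    (Defs.shift vk' (- (remaining (S i)))) (Defs.shift (vs i) (ds i)).
Proof.
  move=> hi; rewrite /retimed shift_override.
  have -> : Defs.shift (Defs.shift vk' (- (remaining i))) (ds i) =
            Defs.shift vk' (- (remaining (S i))).
    apply: functional_extensionality => x.
    by rewrite !shift_apply eshiftD /=; congr eshift; ring.
  apply: override_ext => x; split.
  - move=> [hx hn]; split; first by split=> // -[l [hl hrel]]; apply: hn; exists l; split=> //; lia.
    by move=> hrel; apply: hn; exists i; split=> //; split=> //; apply: deep_future.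
  - move=> [[hx hn] hp]; split=> // -[l [hl hrel]].
    case: (Nat.eq_dec l i) => [el | hne]; first by subst l; apply: hp; case: hrel.
    by apply: hn; exists l; split=> //; lia.
Qed.

Lemma retimed_step i :
  (i < K)%nat -> step fut A (qs i) (retimed i) (ds i) (ts i) (qs (S i)) (retimed (S i)).
Proof.
  move=> hi; have [ht [hsrc [hdst [hd [hv hrun]]]]] := path_step hi.
  do 4 (split=> //); rewrite shift_retimed //; split.
    by apply: override_is_val hv => x [[hx _] _]; apply: retimed_target_val => //; lia.
  apply: run_override hrun.
  - by move=> x [hx _]; apply: deep_future.
  - by move=> x [hx _]; apply: retimed_target_val => //; lia.
  - move=> pre g post w hp hpre hpost hsat.
    apply: (mid_guard (pre := pre ++ IGuard g :: nil)) => //.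
    + by rewrite hp -app_assoc.
    + by apply: run_app hpre (run_guard hsat (run_nil _ _)).
    + by apply: guards_of_trans ht _; rewrite hp; apply/in_or_app; right; left.
Qed.

Lemma retimed_is_path : is_path fut A k qs retimed ds ts.
Proof.
  split; first by case: hpath.
  by split=> i hi; [apply: retimed_is_val | apply: retimed_step]; lia.
Qed.

End Retiming.

Unset Implicit Arguments.

Theorem lemma11 (X : finType) (fut : X -> bool) (Q Sg : finType)
  (A : GTA X Q Sg) (M k : nat) (qs : nat -> Q) (vs : nat -> valu X)
  (ds : nat -> R) (ts : nat -> trans X Q Sg) (vk' : valu X) :
  safe fut A ->
  le 1 (nclocks X) ->
  const_bound M A ->
  is_path fut A k qs vs ds ts ->
  simM M (vs 0%nat) (vs (k - 1)%nat) ->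
  (forall x, fut x = true ->
     (exists i, lt i (k - 1) /\ released fut (ts i) x) \/ vs 0%nat x = NInf) ->
  is_val fut vk' ->
  (forall x, ele (Fin (- INR M)) (vs 0%nat x) -> vk' x = vs (k - 1)%nat x) ->
  approxM M (vs 0%nat) vk' ->
  exists vs' : nat -> valu X,
    vs' 0%nat = vs 0%nat /\ vs' (k - 1)%nat = vk' /\
    is_path fut A k qs vs' ds ts.
Proof.
  move=> hsafe hclocks hbound hpath hsim hreleased hval' hL happrox.
  exists (retimed fut M k vs ds ts vk').
  split; [|split].
  - by apply: retimed_first; eassumption.
  - by apply: retimed_last; eassumption.
  - by apply: retimed_is_path; eassumption.
Qed.
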